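(* Let $B$ be a commutative ring with identity which is a pm-ring, and let $A$ be a dense subring of $B$. Then for any two distinct maximal ideals $M, M'$ of $B$, the set $(M\cap A)\cap(M'\cap A)$ does not contain any prime ideal of $A$.
   Context: All rings are commutative with identity; subrings contain the identity. A pm-ring is a ring in which every prime ideal is contained in a unique maximal ideal. A subring $A$ of $B$ is dense in $B$ if for every ideal $I$ of $B$ and every $b\in B\setminus \operatorname{rad}(I)$ there exists $a\in B\setminus\operatorname{rad}(I)$ with $ab\in A$. *)

From HB Require Import structures.
From mathcomp Require Import all_boot all_algebra.
Set Implicit Arguments. Unset Strict Implicit. Unset Printing Implicit Defensive.
Import GRing.Theory.
Local Open Scope ring_scope.

Definition is_subring (R : comPzRingType) (S : R -> Prop) : Prop :=
  [/\ S 1, (forall x y, S x -> S y -> S (x - y)) &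
      (forall x y, S x -> S y -> S (x * y))].

Definition is_ideal_in (R : comPzRingType) (S I : R -> Prop) : Prop :=
  [/\ (forall x, I x -> S x), I 0,
      (forall x y, I x -> I y -> I (x - y)) &
      (forall s x, S s -> I x -> I (s * x))].

Definition is_ideal (R : comPzRingType) (I : R -> Prop) : Prop :=
  is_ideal_in (fun _ => True) I.

Definition is_prime_ideal_in (R : comPzRingType) (S P : R -> Prop) : Prop :=
  [/\ is_ideal_in S P, ~ P 1 &
      (forall a b, S a -> S b -> P (a * b) -> P a \/ P b)].

Definition is_prime_ideal (R : comPzRingType) (P : R -> Prop) : Prop :=
  is_prime_ideal_in (fun _ => True) P.

Definition is_maximal_ideal (R : comPzRingType) (M : R -> Prop) : Prop :=
  [/\ is_ideal M, ~ M 1 &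
      (forall J : R -> Prop, is_ideal J -> (forall x, M x -> J x) ->
         (forall x, J x <-> M x) \/ J 1)].

Definition rad (R : comPzRingType) (I : R -> Prop) : R -> Prop :=
  fun b => exists n : nat, I (b ^+ n).

Definition pm_ring (R : comPzRingType) : Prop :=
  forall P : R -> Prop, is_prime_ideal P ->
    exists M : R -> Prop, [/\ is_maximal_ideal M, (forall x, P x -> M x) &
      forall M' : R -> Prop, is_maximal_ideal M' -> (forall x, P x -> M' x) ->
        forall x, M' x <-> M x].

Definition dense_subring (B : comPzRingType) (A : B -> Prop) : Prop :=
  forall I : B -> Prop, is_ideal I ->
    forall b, ~ rad I b -> exists a, ~ rad I a /\ A (a * b).

From Pilot Require Import Defs.
From mathcomp Require Import all_boot all_algebra.
From mathcomp Require Import boolp classical_sets ring.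
Local Open Scope ring_scope.
Local Open Scope classical_set_scope.
Import GRing.Theory.
Set Implicit Arguments.
Unset Strict Implicit.

(* If M <> M', the multiplicative set (B \ M)(B \ M') must contain 0: otherwise
   an ideal maximal among those avoiding it is a prime contained in both M and
   M', against the pm property.  So s t = 0 with s \notin M, t \notin M'.
   Density gives a, a' \notin M, M' with a s, a' t \in A; their product is 0,
   so a prime P of A inside M \cap M' contains a s \notin M or a' t \notin M'. *)

Section Ideals.
Variable R : comPzRingType.
Implicit Types (I J M P Q : set R) (x y : R).

Lemma idealD I x y : is_ideal I -> I x -> I y -> I (x + y).
Proof.
case=> _ I0 IB _ Ix Iy.
by have := IB x (0 - y) Ix (IB _ _ I0 Iy); rewrite sub0r opprK.
Qed.

Lemma idealMl I r x : is_ideal I -> I x -> I (r * x).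
Proof. by case=> _ _ _ IM; apply: IM. Qed.

Lemma idealMr I r x : is_ideal I -> I x -> I (x * r).
Proof. by rewrite mulrC; apply: idealMl. Qed.

Section Avoiding.
Variable S : set R.

Definition avoids I := forall x, I x -> ~ S x.

Definition maximal_avoiding Q :=
  [/\ is_ideal Q, avoids Q &
      forall J, is_ideal J -> avoids J -> Q `<=` J -> J `<=` Q].

Lemma maximal_avoiding_extend Q c :
  maximal_avoiding Q -> ~ Q c -> exists x r, S x /\ Q (x - r * c).
Proof.
case=> QI _ Qmax Qc; have [_ Q0 QB _] := QI.
pose J x := exists r, Q (x - r * c).
have JI : is_ideal J.
  split=> //.
  - by exists 0; rewrite mul0r subr0.
  - move=> x y [r Qr] [r' Qr']; exists (r - r').
    by have := QB _ _ Qr Qr'; congr Q; ring.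
  - by move=> s x _ [r Qr]; exists (s * r); rewrite -mulrA -mulrBr; apply: idealMl.
have QJ : Q `<=` J by move=> x Qx; exists 0; rewrite mul0r subr0.
have Jc : J c by exists 1; rewrite mul1r subrr.
have /existsNP [x /not_implyP [[r Qr] /contrapT Sx]] : ~ avoids J.
  by move=> JS; apply: Qc; apply: Qmax JI JS QJ c Jc.
by exists x, r.
Qed.

Hypothesis S1 : S 1.
Hypothesis SM : forall x y, S x -> S y -> S (x * y).
Hypothesis S0 : ~ S 0.

Lemma maximal_avoiding_prime Q : maximal_avoiding Q -> is_prime_ideal Q.
Proof.
move=> QM; have [QI QS _] := QM.
split=> //; first by move/QS.
move=> a b _ _ Qab.
have [Qa|Qa] := EM (Q a); first by left.
have [Qb|Qb] := EM (Q b); first by right.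
have [x [r [Sx Qx]]] := maximal_avoiding_extend QM Qa.
have [y [r' [Sy Qy]]] := maximal_avoiding_extend QM Qb.
exfalso; apply: (QS (x * y)); last exact: SM.
have -> : x * y = (x - r * a) * y + r * a * (y - r' * b) + r * r' * (a * b).
  by ring.
apply: idealD (idealMl _ QI Qab) => //.
by apply: idealD => //; [apply: idealMr | apply: idealMl].
Qed.

Lemma exists_maximal_avoiding : exists Q, maximal_avoiding Q.
Proof.
pose closed X := [/\ forall x y, X x -> X y -> X (x - y),
                     forall r x, X x -> X (r * x) & avoids X].
have [Q [[QB QM QS] Qmax]] : exists Q, closed Q /\ forall Y, Q `<` Y -> ~ closed Y.
  apply: Zorn_bigcup => F FP Ftot; split.
  - move=> x y [X FX Xx] [Y FY Yy].
    have [XY|YX] := Ftot X Y FX FY.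
    + by exists Y => //; have [YB _ _] := FP Y FY; apply: YB => //; apply: XY.
    + by exists X => //; have [XB _ _] := FP X FX; apply: XB => //; apply: YX.
  - by move=> r x [X FX Xx]; exists X => //; have [_ XM _] := FP X FX; apply: XM.
  - by move=> x [X FX Xx]; have [_ _ XS] := FP X FX; apply: XS.
(* Zorn also admits the empty set; [set 0] shows that a maximal Q is nonempty. *)
have Q0 : Q 0.
  apply: contrapT => nQ0; apply: (Qmax [set 0]).
    split; last by move/(_ 0 erefl).
    by move=> x Qx; exfalso; apply: nQ0; rewrite -(subrr x); apply: QB.
  split; [by move=> _ _ -> ->; rewrite subr0 | by move=> r _ ->; rewrite mulr0 |].
  by move=> _ ->.
have QI : is_ideal Q by split=> // s x _; apply: QM.
exists Q; split=> // J [_ _ JB JM] JS QJ x Jx.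
apply: contrapT => Qx; apply: (Qmax J); last by split=> // r y; apply: JM.
by split=> // /(_ x Jx).
Qed.

Lemma exists_prime_avoiding : exists P, is_prime_ideal P /\ avoids P.
Proof.
have [Q QM] := exists_maximal_avoiding.
by exists Q; split; [apply: maximal_avoiding_prime | case: QM].
Qed.

End Avoiding.

Lemma maximal_ideal_prime M : is_maximal_ideal M -> is_prime_ideal M.
Proof.
case=> MI M1 Mmax; apply: (@maximal_avoiding_prime (fun x => x = 1)) => //.
- by move=> x y -> ->; rewrite mulr1.
- split=> // [x Mx x1|J JI J1 MJ]; first by apply: M1; rewrite -x1.
  by case: (Mmax J JI MJ) => [JM x /JM|/J1].
Qed.

Lemma prime_ideal_rad P x : is_prime_ideal P -> Defs.rad P x -> P x.
Proof.
case=> _ P1 Pmul [n]; elim: n => [|n IH]; first by rewrite expr0.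
by rewrite exprS => /(Pmul _ _ I I) [].
Qed.

Lemma pm_ring_maximal_zero_product M M' : pm_ring R ->
  is_maximal_ideal M -> is_maximal_ideal M' -> ~ (forall x, M x <-> M' x) ->
  exists s t, [/\ ~ M s, ~ M' t & s * t = 0].
Proof.
move=> pm hM hM' neqMM'; apply: contrapT => noprod.
have [[_ M1 Mmul] [_ M'1 M'mul]] := (maximal_ideal_prime hM, maximal_ideal_prime hM').
pose S x := exists s t, [/\ ~ M s, ~ M' t & x = s * t].
have S1 : S 1 by exists 1, 1; rewrite mulr1.
have SM : forall x y, S x -> S y -> S (x * y).
  move=> _ _ [s [t [Ms Mt ->]]] [s' [t' [Ms' Mt' ->]]].
  exists (s * s'), (t * t'); rewrite mulrACA.
  by split=> //; [case/(Mmul _ _ I I) | case/(M'mul _ _ I I)].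
have S0 : ~ S 0 by case=> s [t [Ms Mt st]]; apply: noprod; exists s, t.
have [Q [QP QS]] := exists_prime_avoiding S1 SM S0.
have QM : Q `<=` M.
  by move=> x Qx; apply: contrapT => Mx; apply: (QS x Qx); exists x, 1; rewrite mulr1.
have QM' : Q `<=` M'.
  by move=> x Qx; apply: contrapT => Mx; apply: (QS x Qx); exists 1, x; rewrite mul1r.
have [N [_ _ Nuniq]] := pm Q QP.
by apply: neqMM' => x; rewrite (Nuniq M hM QM) (Nuniq M' hM' QM').
Qed.

Lemma dense_multiple_notin_maximal A M b : dense_subring A ->
  is_maximal_ideal M -> ~ M b -> exists a, ~ M (a * b) /\ A (a * b).
Proof.
move=> dense hM Mb; have MP := maximal_ideal_prime hM.
have [a [Ma Aab]] : exists a, ~ Defs.rad M a /\ A (a * b).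
  by apply: dense; [case: hM | move/(prime_ideal_rad MP)].
exists a; split=> //; case: MP => _ _ Mmul /(Mmul _ _ I I) [] // Ma'.
by apply: Ma; exists 1%N; rewrite expr1.
Qed.

End Ideals.

Theorem theorem3p7 (B : comPzRingType) (A : B -> Prop) :
  pm_ring B -> is_subring A -> dense_subring A ->
  forall M M' : B -> Prop, is_maximal_ideal M -> is_maximal_ideal M' ->
    ~ (forall x, M x <-> M' x) ->
    ~ exists P : B -> Prop, is_prime_ideal_in A P /\
        (forall x, P x -> (M x /\ A x) /\ (M' x /\ A x)).
Proof.
move=> pm _ dense M M' hM hM' neqMM' [P [[[_ P0 _ _] _ Pmul] PMM']].
have [s [t [Ms M't st0]]] := pm_ring_maximal_zero_product pm hM hM' neqMM'.
have [a [Mas Aas]] := dense_multiple_notin_maximal dense hM Ms.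
have [a' [M'a't Aa't]] := dense_multiple_notin_maximal dense hM' M't.
have : P (a * s * (a' * t)) by rewrite mulrACA st0 mulr0.
by case/(Pmul _ _ Aas Aa't) => /PMM' [[? _] [? _]].
Qed.
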